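(* Let $\Gamma$ be a $\Bbbk$-algebra and $\sim$ an equivalence relation on $\mathrm{cfs}(\Gamma)$. If $V$ is a finite-dimensional block module, then every composition factor of $V$ is isomorphic to $S_{\mathfrak m}$ for some $\mathfrak m\in B$ with $B\in\mathrm{Supp}(V)$.
   Context: $\mathrm{cfs}(\Gamma)$: maximal two-sided ideals $\mathfrak m$ of $\Gamma$ with $\dim\Gamma/\mathfrak m<\infty$; $S_{\mathfrak m}$ is the unique simple $\Gamma/\mathfrak m$-module. For a class $B$, $\mathcal W(B)=\{\mathfrak m_1\cdots\mathfrak m_k:k\ge0,\mathfrak m_i\in B\}$; for a $\Gamma$-module $V$, $V(B)=\{v:\mathfrak mv=0$ for some $\mathfrak m\in\mathcal W(B)\}$. $V$ is a block module if $V=\bigoplus_BV(B)$; $\mathrm{Supp}(V)=\{B:V(B)\neq0\}$. *)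

From HB Require Import structures.
From mathcomp Require Import all_boot all_order all_algebra.
Set Implicit Arguments. Unset Strict Implicit. Unset Printing Implicit Defensive.
Import GRing.Theory.
Local Open Scope ring_scope.

Definition subsetG (G : Type) := G -> Prop.

Section Defs.
Variables (k : fieldType) (G : algType k).

Definition ideal2 (I : subsetG G) : Prop :=
  [/\ I 0, (forall x y, I x -> I y -> I (x + y)) &
      (forall a x, I x -> I (a * x) /\ I (x * a))].

Definition max_ideal2 (I : subsetG G) : Prop :=
  [/\ ideal2 I, ~ I 1 &
      forall J : subsetG G, ideal2 J -> ~ J 1 -> (forall x, I x -> J x) ->
        forall x, J x -> I x].

(* dim_k (Gamma / I) < infinity *)
Definition fin_codim (I : subsetG G) : Prop :=
  exists n (e : 'I_n -> G), forall g, exists c : 'I_n -> k,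
    I (g - \sum_(i < n) c i *: e i).

Definition cfs (I : subsetG G) : Prop := max_ideal2 I /\ fin_codim I.

(* product of ideals m_1 m_2 ... m_k (the empty product is Gamma) *)
Fixpoint iprod (ms : seq (subsetG G)) : subsetG G :=
  match ms with
  | [::] => fun _ => True
  | m :: ms' => fun x => exists n (a b : 'I_n -> G),
      [/\ forall i, m (a i), forall i, iprod ms' (b i) & x = \sum_(i < n) a i * b i]
  end.

Fixpoint all_in (B : subsetG G -> Prop) (ms : seq (subsetG G)) : Prop :=
  match ms with [::] => True | m :: ms' => B m /\ all_in B ms' end.

Definition blk (R : subsetG G -> subsetG G -> Prop) (m0 : subsetG G) :
  subsetG G -> Prop := fun m => cfs m /\ R m0 m.

Definition equiv_on_cfs (R : subsetG G -> subsetG G -> Prop) : Prop :=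
  [/\ forall m, cfs m -> R m m,
      forall m m', cfs m -> cfs m' -> R m m' -> R m' m &
      forall m1 m2 m3, cfs m1 -> cfs m2 -> cfs m3 -> R m1 m2 -> R m2 m3 -> R m1 m3].

Variable V : vectType k.

Definition is_module (act : G -> V -> V) : Prop :=
  (forall a b v, act (a + b) v = act a v + act b v) /\
  (forall c a v, act (c *: a) v = c *: act a v) /\
  (forall a u v, act a (u + v) = act a u + act a v) /\
  (forall a c v, act a (c *: v) = c *: act a v) /\
  (forall v, act 1 v = v) /\
  (forall a b v, act (a * b) v = act a (act b v)).

Definition Vpart (act : G -> V -> V) (B : subsetG G -> Prop) (v : V) : Prop :=
  exists ms, all_in B ms /\ forall x, iprod ms x -> act x v = 0.

(* V = (+)_B V(B), B ranging over the blocks of cfs(Gamma) for R *)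
Definition block_module (act : G -> V -> V) (R : subsetG G -> subsetG G -> Prop) : Prop :=
  (forall v, exists r (m0 : 'I_r -> subsetG G) (w : 'I_r -> V),
      [/\ forall i, cfs (m0 i), forall i, Vpart act (blk R (m0 i)) (w i)
        & v = \sum_(i < r) w i]) /\
  (forall r (m0 : 'I_r -> subsetG G) (w : 'I_r -> V),
      (forall i, cfs (m0 i)) -> (forall i j, i != j -> ~ R (m0 i) (m0 j)) ->
      (forall i, Vpart act (blk R (m0 i)) (w i)) ->
      \sum_(i < r) w i = 0 -> forall i, w i = 0).

Definition in_Supp (act : G -> V -> V) R (m0 : subsetG G) : Prop :=
  cfs m0 /\ exists v, Vpart act (blk R m0) v /\ v <> 0.

Definition submodule (act : G -> V -> V) (U : {vspace V}) : Prop :=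
  forall a u, u \in U -> act a u \in U.

Definition simple_factor (act : G -> V -> V) (W U : {vspace V}) : Prop :=
  [/\ submodule act W, submodule act U, (W <= U)%VS, W != U &
      forall X, submodule act X -> (W <= X)%VS -> (X <= U)%VS -> X = W \/ X = U].

Definition comp_series (act : G -> V -> V) (r : nat) (U : nat -> {vspace V}) : Prop :=
  [/\ U 0%N = 0%VS, U r = fullv & forall i, (i < r)%N -> simple_factor act (U i) (U i.+1)].

(* The factor U/W is isomorphic to S_m, the unique simple Gamma/m-module,
   i.e. U/W is a simple Gamma-module annihilated by m. *)
Definition factor_iso_S (act : G -> V -> V) (m : subsetG G) (W U : {vspace V}) : Prop :=
  simple_factor act W U /\ forall x u, m x -> u \in U -> act x u \in W.

End Defs.

From mathcomp Require Import all_boot all_order all_algebra.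
From Stdlib Require Import Classical.
Set Implicit Arguments. Unset Strict Implicit. Unset Printing Implicit Defensive.
Import GRing.Theory.
Local Open Scope ring_scope.

(* Let W < U be consecutive terms of the composition series.  If no ideal of a
   block in Supp(V) annihilates U/W, then, U/W being simple, every such ideal
   maps each u in U \ W to some element of U \ W; iterating, so does every
   finite product of such ideals, and even the common annihilator of finitely
   many vectors of the V(B), B in Supp(V).  Applied to a vector u0 in U \ W
   written as a sum of such vectors, this yields x with x u0 = 0 in U \ W,
   which is absurd since 0 lies in W. *)

Lemma iprod_mulr (k : fieldType) (G : algType k) (ms : seq (subsetG G)) x c :
  iprod ms x -> iprod ms (x * c).
Proof.
elim: ms x => [|m ms IHms] x //= [n [a [b [ma msb ->]]]].
exists n, a, (fun i => b i * c); split=> // [i|]; first exact: IHms.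
by rewrite mulr_suml; apply: eq_bigr => i _; rewrite mulrA.
Qed.

Lemma all_in_sub (k : fieldType) (G : algType k) (B C : subsetG G -> Prop) ms :
  (forall m, B m -> C m) -> all_in B ms -> all_in C ms.
Proof. by move=> BC; elim: ms => [|m ms IHms] //= [/BC Cm /IHms]. Qed.

Lemma vspace_of_pred (k : fieldType) (V : vectType k) (P : V -> Prop) :
  P 0 -> (forall u v, P u -> P v -> P (u + v)) -> (forall c v, P v -> P (c *: v)) ->
  exists X : {vspace V}, forall v, v \in X <-> P v.
Proof.
move=> P0 PD PZ.
pose in_P (X : {vspace V}) := forall x, x \in X -> P x.
(* A subspace inside P that misses some v with P v grows by <[v]>; as dimensions
   are bounded by dim V, after dim V + 1 steps P is exhausted. *)
suff [X [XP Xmax]] : exists X, in_P X /\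
    ((forall v, P v -> v \in X) \/ ((\dim (fullv : {vspace V})).+1 <= \dim X)%N).
  exists X => v; split; first exact: XP.
  case: Xmax => [Xmax | ltfX]; first exact: Xmax.
  by have := dimvS (subvf X); rewrite leqNgt ltfX.
elim: (\dim fullv).+1 => [|n [X [XP [Xmax | ltnX]]]].
- by exists 0%VS; split=> [x /[!memv0] /eqP -> | ]; [| right].
- by exists X; split=> //; left.
case: (classic (forall v, P v -> v \in X)) => [Xmax | notXmax].
  by exists X; split=> //; left.
have [v Pv vX] : exists2 v, P v & v \notin X.
  apply: NNPP => none; apply: notXmax => v Pv; apply: NNPP => vX.
  by apply: none; exists v => //; apply/negP.
exists (X + <[v]>)%VS; split.
  by move=> x /memv_addP [a Xa [b /vlineP [c ->] ->]]; apply: PD (XP _ Xa) (PZ c _ Pv).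
right; apply: leq_ltn_trans ltnX _.
rewrite (ltn_leqif (dimv_leqif_sup (addvSl X <[v]>))) subv_add subvv /=.
by rewrite -memvE.
Qed.

Section ModuleAction.

Variables (k : fieldType) (G : algType k) (V : vectType k) (act : G -> V -> V).
Hypothesis act_module : is_module act.

Let actvD a u v : act a (u + v) = act a u + act a v.
Proof. by case: act_module => _ [_ []]. Qed.

Let actvZ a c v : act a (c *: v) = c *: act a v.
Proof. by case: act_module => _ [_ [_ []]]. Qed.

Let act1v v : act 1 v = v.
Proof. by case: act_module => _ [_ [_ [_ []]]]. Qed.

Let actM a b v : act (a * b) v = act a (act b v).
Proof. by case: act_module => _ [_ [_ [_ [_]]]]. Qed.

Lemma actv0 a : act a 0 = 0.
Proof. by rewrite -(scale0r 0) actvZ !scale0r. Qed.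

Lemma actv_sum a r (w : 'I_r -> V) :
  act a (\sum_(j < r) w j) = \sum_(j < r) act a (w j).
Proof. exact: (big_morph _ (actvD a) (actv0 a)). Qed.

Definition nonvanishing_on (S : V -> Prop) (I : subsetG G) : Prop :=
  forall u, S u -> exists2 y, I y & S (act y u).

Lemma nonvanishing_on_iprod S ms :
  all_in (nonvanishing_on S) ms -> nonvanishing_on S (iprod ms).
Proof.
elim: ms => [_ u Su | m ms IHms [mS /IHms msS] u /msS [x msx /mS [y my Syxu]]].
  by exists 1; rewrite ?act1v.
exists (y * x); last by rewrite actM.
by exists 1%N, (fun=> y), (fun=> x); split; rewrite ?big_ord1.
Qed.

(* Right-closedness of I keeps the witness y * x, with y in the ideal of the
   first vector and x a witness for the others, inside that ideal. *)
Lemma nonvanishing_on_annihilator S r (w : 'I_r -> V) :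
  (forall j, exists I : subsetG G, [/\ forall x c, I x -> I (x * c),
     nonvanishing_on S I & forall x, I x -> act x (w j) = 0]) ->
  nonvanishing_on S (fun x => forall j, act x (w j) = 0).
Proof.
elim: r w => [|r IHr] w wI u Su; first by exists 1; [case | rewrite act1v].
have [x wx Sxu] := IHr _ (fun j => wI (lift ord0 j)) u Su.
have [I [Imulr /(_ _ Sxu) [y Iy Syxu] Iw]] := wI ord0.
exists (y * x); last by rewrite actM.
move=> j; case: (unliftP ord0 j) => [j' ->|->]; first by rewrite actM wx actv0.
exact/Iw/Imulr.
Qed.

(* The vectors of U whose image under m lies in W form a submodule between W
   and U; simplicity of U/W leaves only the two extreme cases. *)
Lemma simple_factor_annihilated_or_nonvanishing (W U : {vspace V}) m :
  simple_factor act W U -> ideal2 m ->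
  (forall x u, m x -> u \in U -> act x u \in W) \/
  nonvanishing_on (fun u => u \in U /\ u \notin W) m.
Proof.
move=> [subW subU WU _ Umin] [_ _ m_ideal].
have [X memX] : exists X : {vspace V},
    forall v, v \in X <-> v \in U /\ forall y, m y -> act y v \in W.
  apply: vspace_of_pred.
  - by split=> [|y _]; rewrite ?actv0 mem0v.
  - move=> u v [Uu mu] [Uv mv]; split=> [|y my]; first exact: memvD.
    by rewrite actvD memvD ?mu ?mv.
  - by move=> c v [Uv mv]; split=> [|y my]; rewrite ?actvZ memvZ ?mv.
have subX : submodule act X.
  move=> a u /memX [Uu mu]; apply/memX; split=> [|y my]; first exact: subU.
  by rewrite -actM mu //; case: (m_ideal a y my).
have WX : (W <= X)%VS.
  by apply/subvP => w Ww; apply/memX; split=> [|y _]; [exact: (subvP WU) | exact: subW].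
have XU : (X <= U)%VS by apply/subvP => u /memX [].
case: (Umin X subX WX XU) => [XW | XU']; last first.
  by left=> x u mx; rewrite -XU' => /memX [_]; apply.
right=> u [Uu Wu]; apply: NNPP => no_y; move: Wu; rewrite -XW => /negP; apply.
apply/memX; split=> // y my; apply: NNPP => Wyu; apply: no_y; exists y => //.
by split; [exact: subU | exact/negP].
Qed.

End ModuleAction.

Theorem mainTheorem16 (k : fieldType) (G : algType k)
  (R : subsetG G -> subsetG G -> Prop) (V : vectType k) (act : G -> V -> V) :
  equiv_on_cfs R -> is_module act -> block_module act R ->
  forall (r : nat) (U : nat -> {vspace V}), comp_series act r U ->
  forall i, (i < r)%N ->
  exists m0 m, [/\ in_Supp act R m0, blk R m0 m & factor_iso_S act m (U i) (U i.+1)].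
Proof.
move=> _ act_module [decomp _] r U [_ _ Usimple] i lt_ir; apply: NNPP => no_factor.
have [WU neWU] : (U i <= U i.+1)%VS /\ U i != U i.+1 by case: (Usimple i lt_ir).
have [u0 Uu0 Wu0] : exists2 u0, u0 \in U i.+1 & u0 \notin U i.
  by apply/subvPn; apply: contra neWU => UW; rewrite eqEsubv WU.
have [n [m0 [w [cfs_m0 wB u0E]]]] := decomp u0.
pose S u := u \in U i.+1 /\ u \notin U i.
have wI j : exists I : subsetG G, [/\ forall x c, I x -> I (x * c),
    nonvanishing_on act S I & forall x, I x -> act x (w j) = 0].
  have [w0 | nz_w] := eqVneq (w j) 0.
    exists (iprod [::]); split=> [x c||x _]; rewrite ?w0 ?(actv0 act_module) //.
    exact: nonvanishing_on_iprod.
  have [ms [msB msw]] := wB j; exists (iprod ms); split=> //; first exact: iprod_mulr.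
  apply/nonvanishing_on_iprod/(all_in_sub _ msB) => // m [cfs_m Rm].
  have [[m_ideal _ _] _] := cfs_m.
  have [mU | //] := simple_factor_annihilated_or_nonvanishing act_module
                      (Usimple i lt_ir) m_ideal.
  case: no_factor; exists (m0 j), m; split=> //; split=> //; last exact: Usimple.
  by exists (w j); split=> //; apply/eqP.
have [x wx [_]] := nonvanishing_on_annihilator act_module wI (conj Uu0 Wu0).
by rewrite u0E actv_sum // big1 // mem0v.
Qed.
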